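(* If $(\mathcal{K}(X),\overline{\mathbb{F}})$ is Li-Yorke sensitive, then $(X,\mathbb{F})$ has chaotic dependence on initial conditions. Further, if $(\mathcal{F}(X),\overline{\mathbb{F}})$ is Li-Yorke sensitive, then $(X,\mathbb{F})$ is Li-Yorke sensitive.
   Context: $(X,d)$ compact metric, $\mathbb{F}=(f_n)$ continuous self-maps, $\omega_n=f_n\circ\cdots\circ f_1$. A pair $\{x,y\}$ is $\delta$-scrambled if $\limsup_n d(\omega_n(x),\omega_n(y))>\delta$ and $\liminf_n d(\omega_n(x),\omega_n(y))=0$. Li-Yorke sensitive: there is $\delta>0$ such that for every $x$ and neighborhood $U$ of $x$ there is $y\in U$ with $\{x,y\}$ $\delta$-scrambled. Chaotic dependence on initial conditions: for every $x$ and neighborhood $U$ of $x$ there is $y\in U$ with $\limsup_n d(\omega_n(x),\omega_n(y))>0$ and $\liminf_n d(\omega_n(x),\omega_n(y))=0$. $\mathcal{K}(X)$ (non-empty compact subsets) and $\mathcal{F}(X)$ (non-empty finite subsets) carry the Hausdorff metric $d_H$; the induced system is $\overline{\omega}_n(A)=\omega_n(A)$ with notions defined using $d_H$. *)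

From Stdlib Require Import Reals Lra List Classical ClassicalEpsilon.
Open Scope R_scope.

Section Metric.
Context {X : Type} (d : X -> X -> R).

Definition is_metric : Prop :=
  (forall x y, d x y = 0 <-> x = y) /\
  (forall x y, d x y = d y x) /\
  (forall x y z, d x z <= d x y + d y z).

Definition open_set (U : X -> Prop) : Prop :=
  forall x, U x -> exists r, r > 0 /\ forall y, d x y < r -> U y.

Definition compact_set (K : X -> Prop) : Prop :=
  forall (I : Type) (U : I -> X -> Prop),
    (forall i, open_set (U i)) ->
    (forall x, K x -> exists i, U i x) ->
    exists l : list I, forall x, K x -> exists i, In i l /\ U i x.

Definition compact_space : Prop := compact_set (fun _ => True).

Definition continuous_map (f : X -> X) : Prop :=
  forall x eps, eps > 0 -> exists del, del > 0 /\
    forall y, d x y < del -> d (f x) (f y) < eps.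
End Metric.

(* supremum / infimum of a set of reals (meaningful when it exists) *)
Definition Rsup (E : R -> Prop) : R :=
  epsilon (inhabits 0) (fun r => is_lub E r).
Definition Rinf (E : R -> Prop) : R := - Rsup (fun x => E (- x)).

Definition dist_pt_set {X : Type} (d : X -> X -> R) (x : X) (B : X -> Prop) : R :=
  Rinf (fun r => exists b, B b /\ r = d x b).

Definition dH {X : Type} (d : X -> X -> R) (A B : X -> Prop) : R :=
  Rmax (Rsup (fun r => exists a, A a /\ r = dist_pt_set d a B))
       (Rsup (fun r => exists b, B b /\ r = dist_pt_set d b A)).

Definition nonempty_compact {X : Type} (d : X -> X -> R) (A : X -> Prop) : Prop :=
  (exists x, A x) /\ compact_set d A.

Definition nonempty_finite {X : Type} (A : X -> Prop) : Prop :=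
  exists l : list X, l <> nil /\ forall x, A x <-> In x l.

Definition limsup_gt (a : nat -> R) (c : R) : Prop :=
  exists eps, eps > 0 /\ forall N, exists n, (N <= n)%nat /\ a n > c + eps.

Definition liminf_eq (a : nat -> R) (l : R) : Prop :=
  (forall eps, eps > 0 -> forall N, exists n, (N <= n)%nat /\ a n < l + eps) /\
  (forall eps, eps > 0 -> exists N, forall n, (N <= n)%nat -> a n > l - eps).

(* omega f n = f_n o ... o f_1, with f 0 playing the role of f_1 *)
Fixpoint omega {X : Type} (f : nat -> X -> X) (n : nat) (x : X) : X :=
  match n with
  | O => x
  | S m => f m (omega f m x)
  end.

Definition omega_bar {X : Type} (f : nat -> X -> X) (n : nat) (A : X -> Prop) : X -> Prop :=
  fun z => exists a, A a /\ z = omega f n a.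

Definition scrambled {Y : Type} (D : Y -> Y -> R) (w : nat -> Y -> Y)
  (delta : R) (x y : Y) : Prop :=
  limsup_gt (fun n => D (w n x) (w n y)) delta /\
  liminf_eq (fun n => D (w n x) (w n y)) 0.

Definition LY_sensitive {Y : Type} (P : Y -> Prop) (D : Y -> Y -> R)
  (w : nat -> Y -> Y) : Prop :=
  exists delta, delta > 0 /\
    forall x, P x -> forall eps, eps > 0 ->
      exists y, P y /\ D x y < eps /\ scrambled D w delta x y.

Definition chaotic_dependence {Y : Type} (P : Y -> Prop) (D : Y -> Y -> R)
  (w : nat -> Y -> Y) : Prop :=
  forall x, P x -> forall eps, eps > 0 ->
    exists y, P y /\ D x y < eps /\ scrambled D w 0 x y.

From Stdlib Require Import Reals Lra Lia List Classical ClassicalEpsilon.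
Open Scope R_scope.

(* Both parts start from hyperspace sensitivity at a singleton {a}: it yields sets B
   close to {a} whose orbits come back Hausdorff-close to the orbit of a, so every point
   of B is proximal to a, while at infinitely many times some point of B is delta-far
   from a.

   When B is finite, one point of B is delta-far from a infinitely often, so it is
   delta-scrambled with a.

   When B is only compact, the far point depends on the time.  Suppose no point near x
   is scrambled with x; then every nearby point proximal to x is asymptotic to x.  Hence
   near any point a asymptotic to x there are points b, again asymptotic to x, which are
   delta/2-far from x at arbitrarily late times.  Continuity of omega_t turns each such b
   into a small closed ball that is far from x at one late time and close to x at a
   later one; iterating inside nested balls, the common point of all balls is proximal
   but not asymptotic to x, hence scrambled with x: a contradiction. *)

Lemma Rsup_is_lub (E : R -> Prop) (M : R) :
  (exists x, E x) -> (forall x, E x -> x <= M) -> is_lub E (Rsup E).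
Proof.
  intros Hne Hbound.
  destruct (completeness E) as [m Hm]; [exists M; exact Hbound | exact Hne |].
  unfold Rsup. apply epsilon_spec. exists m; exact Hm.
Qed.

Lemma Rsup_unique (E : R -> Prop) (m : R) : is_lub E m -> Rsup E = m.
Proof.
  intros Hm.
  assert (Hsup : is_lub E (Rsup E)) by (unfold Rsup; apply epsilon_spec; exists m; exact Hm).
  destruct Hm as [Hub Hleast], Hsup as [Hub' Hleast'].
  apply Rle_antisym; auto.
Qed.

Lemma liminf_eq_0_of_nonneg (a : nat -> R) :
  (forall n, 0 <= a n) ->
  (forall e, e > 0 -> forall N, exists n, (N <= n)%nat /\ a n < e) ->
  liminf_eq a 0.
Proof.
  intros Hge0 Hfreq. split.
  - intros e He N. destruct (Hfreq e He N) as [n [HNn Hn]].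
    exists n. split; [exact HNn | lra].
  - intros e He. exists 0%nat. intros n _. specialize (Hge0 n). lra.
Qed.

Lemma limsup_gt_0_of_not_vanishing (a : nat -> R) :
  ~ (forall e, e > 0 -> exists N, forall n, (N <= n)%nat -> a n < e) ->
  limsup_gt a 0.
Proof.
  intros Hnot. apply not_all_ex_not in Hnot as [e He].
  apply imply_to_and in He as [He Hnot].
  exists (e / 2). split; [lra |]. intros N.
  apply NNPP. intros HnoN. apply Hnot. exists N. intros n HNn.
  apply Rnot_le_lt. intros Hle. apply HnoN. exists n. split; [exact HNn | lra].
Qed.

Lemma halving_eventually_lt (r : nat -> R) :
  (forall n, 0 < r n) -> (forall n, r (S n) <= r n / 2) ->
  forall e N, e > 0 -> exists k, (N <= k)%nat /\ r k < e.
Proof.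
  intros Hpos Hhalf e N He.
  assert (Hdecay : forall k, r (N + k)%nat <= r N * (1 / 2) ^ k).
  { induction k as [|k IHk].
    - rewrite Nat.add_0_r. simpl. lra.
    - rewrite Nat.add_succ_r, <- tech_pow_Rmult.
      specialize (Hhalf (N + k)%nat). lra. }
  destruct (pow_lt_1_zero (1 / 2) ltac:(rewrite Rabs_pos_eq; lra) (e / r N))
    as [k Hk]; [apply Rdiv_lt_0_compat; auto |].
  specialize (Hk k (le_n k)).
  rewrite Rabs_pos_eq in Hk by (apply pow_le; lra).
  exists (N + k)%nat. split; [lia |].
  apply Rle_lt_trans with (1 := Hdecay k).
  apply Rmult_lt_compat_l with (r := r N) in Hk; [| apply Hpos].
  replace (r N * (e / r N)) with e in Hk by (field; apply Rgt_not_eq, Hpos).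
  exact Hk.
Qed.

Lemma list_pigeonhole {A : Type} (l : list A) (P : nat -> A -> Prop) :
  (forall N, exists n, (N <= n)%nat /\ exists b, In b l /\ P n b) ->
  exists b, In b l /\ forall N, exists n, (N <= n)%nat /\ P n b.
Proof.
  induction l as [|x l IH]; intros Hinf.
  - destruct (Hinf 0%nat) as [n [_ [b [[] _]]]].
  - destruct (classic (forall N, exists n, (N <= n)%nat /\ P n x)) as [Hx | Hx].
    + exists x. split; [left; reflexivity | exact Hx].
    + apply not_all_ex_not in Hx as [N0 HN0].
      destruct IH as [b [Hb HPb]].
      * intros N. destruct (Hinf (Nat.max N N0)) as [n [Hn [b [[<- | Hb] HPb]]]].
        -- exfalso. apply HN0. exists n. split; [lia | exact HPb].
        -- exists n. split; [lia |]. exists b. split; assumption.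
      * exists b. split; [right; exact Hb | exact HPb].
Qed.

Lemma list_max_in {A : Type} (g : A -> nat) (l : list A) i :
  In i l -> (g i <= list_max (map g l))%nat.
Proof.
  intros Hi. assert (Hall := proj1 (list_max_le (map g l) _) (le_n _)).
  rewrite Forall_forall in Hall. apply Hall, in_map, Hi.
Qed.

Lemma dependent_choice {T : Type} (P : T -> Prop) (Rel : nat -> T -> T -> Prop) (u0 : T) :
  P u0 -> (forall n u, P u -> exists v, P v /\ Rel n u v) ->
  exists u : nat -> T, u 0%nat = u0 /\ forall n, P (u n) /\ Rel n (u n) (u (S n)).
Proof.
  intros Hu0 Hstep.
  destruct (choice (fun (nu : nat * T) v => P (snd nu) -> P v /\ Rel (fst nu) (snd nu) v))
    as [F HF].
  { intros [n u]. destruct (classic (P u)) as [Hu | Hu].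
    - destruct (Hstep n u Hu) as [v Hv]. exists v. intros _. exact Hv.
    - exists u. intros Hu'. contradiction. }
  exists (fix u n := match n with O => u0 | S m => F (m, u m) end).
  split; [reflexivity |].
  intros n. induction n as [|n [IHP IHR]].
  - split; [exact Hu0 | exact (proj2 (HF (0%nat, u0) Hu0))].
  - destruct (HF (n, _) IHP) as [HP _].
    split; [exact HP | exact (proj2 (HF (S n, _) HP))].
Qed.

Section MetricSpace.
Context {X : Type} (d : X -> X -> R) (Hd : is_metric d).

Lemma dist_xx x : d x x = 0.
Proof. apply (proj1 Hd). reflexivity. Qed.

Lemma dist_sym x y : d x y = d y x.
Proof. apply (proj1 (proj2 Hd)). Qed.

Lemma dist_triangle x y z : d x z <= d x y + d y z.
Proof. apply (proj2 (proj2 Hd)). Qed.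

Lemma dist_ge0 x y : 0 <= d x y.
Proof.
  pose proof (dist_triangle x y x) as Htri.
  rewrite (dist_sym y x), dist_xx in Htri. lra.
Qed.

Lemma singleton_compact (a : X) : compact_set d (fun y => y = a).
Proof.
  intros I U _ Hcover. destruct (Hcover a eq_refl) as [i Hi].
  exists (i :: nil). intros y ->. exists i. split; [left; reflexivity | exact Hi].
Qed.

Hypothesis HX : compact_space d.

Lemma compact_space_bounded : exists M, forall y z, d y z <= M.
Proof.
  destruct (classic (exists p : X, True)) as [[p _] | Hempty].
  2:{ exists 0. intros y. exfalso. apply Hempty. exists y. exact I. }
  destruct (HX nat (fun k y => d p y < INR k)) as [l Hl].
  - intros k y Hy. exists (INR k - d p y). split; [lra |].
    intros z Hz. pose proof (dist_triangle p y z). lra.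
  - intros y _. destruct (INR_unbounded (d p y)) as [n Hn]. exists n. lra.
  - exists (2 * INR (list_max (map (fun k => k) l))). intros y z.
    destruct (Hl y I) as [i [Hi Hy]], (Hl z I) as [j [Hj Hz]].
    apply (list_max_in (fun k => k)), le_INR in Hi.
    apply (list_max_in (fun k => k)), le_INR in Hj.
    pose proof (dist_triangle y p z). rewrite (dist_sym y p) in *. lra.
Qed.

Lemma compact_space_cluster_point (a : nat -> X) :
  exists z, forall r, r > 0 -> forall N, exists j, (N <= j)%nat /\ d z (a j) < r.
Proof.
  apply NNPP. intros Hnone.
  assert (Hisolated : forall z, exists r N, r > 0 /\ forall j, (N <= j)%nat -> r <= d z (a j)).
  { intros z. apply NNPP. intros Hz. apply Hnone. exists z. intros r Hr N.
    apply NNPP. intros Hj. apply Hz. exists r, N. split; [exact Hr |].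
    intros j HNj. apply Rnot_lt_le. intros Hlt. apply Hj. exists j. auto. }
  destruct (HX (X * R * nat)%type (fun '(z, r, N) y =>
      r > 0 /\ (forall j, (N <= j)%nat -> r <= d z (a j)) /\ d z y < r)) as [l Hl].
  - intros [[z r] N] y [Hr [Hfar Hy]]. exists (r - d z y). split; [lra |].
    intros w Hw. split; [exact Hr | split; [exact Hfar |]].
    pose proof (dist_triangle z y w). lra.
  - intros y _. destruct (Hisolated y) as [r [N [Hr Hfar]]].
    exists (y, r, N). split; [exact Hr | split; [exact Hfar |]]. rewrite dist_xx. exact Hr.
  - set (m := list_max (map (fun i : X * R * nat => snd i) l)).
    destruct (Hl (a m) I) as [[[z r] N] [Hin [_ [Hfar Hnear]]]].
    specialize (Hfar m (list_max_in (fun i : X * R * nat => snd i) l _ Hin)). lra.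
Qed.

Lemma nested_closed_balls_meet (a : nat -> X) (r : nat -> R) :
  (forall n, 0 <= r n) -> (forall n, d (a n) (a (S n)) + r (S n) <= r n) ->
  exists z, forall n, d (a n) z <= r n.
Proof.
  intros Hr0 Hnest.
  assert (Hchain : forall i k, d (a i) (a (i + k)%nat) + r (i + k)%nat <= r i).
  { intros i k. induction k as [|k IHk].
    - rewrite Nat.add_0_r, dist_xx. lra.
    - rewrite Nat.add_succ_r.
      pose proof (dist_triangle (a i) (a (i + k)%nat) (a (S (i + k)))).
      specialize (Hnest (i + k)%nat). lra. }
  destruct (compact_space_cluster_point a) as [z Hz].
  exists z. intros i. apply Rnot_lt_le. intros Hfar.
  destruct (Hz (d (a i) z - r i) ltac:(lra) i) as [j [Hij Hj]].
  specialize (Hchain i (j - i)%nat). replace (i + (j - i))%nat with j in Hchain by lia.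
  pose proof (dist_triangle (a i) (a j) z). rewrite (dist_sym z (a j)) in Hj.
  specialize (Hr0 j). lra.
Qed.

End MetricSpace.

Section HausdorffSingleton.
Context {X : Type} (d : X -> X -> R) (Hd : is_metric d).
(* Rsup, hence dH, is a junk value on unbounded sets; compactness supplies the bound. *)
Variable M : R.
Hypothesis d_le_M : forall y z, d y z <= M.
Variables (p : X) (S C : X -> Prop).
Hypothesis S_singleton : forall z, S z <-> z = p.

Lemma dist_pt_singleton c : dist_pt_set d c S = d c p.
Proof.
  unfold dist_pt_set, Rinf. rewrite (Rsup_unique _ (- d c p)); [ring |]. split.
  - intros x [b [Hb Hx]]. apply S_singleton in Hb. subst b. lra.
  - intros ub Hub. apply Hub. exists p. split; [apply S_singleton; reflexivity | ring].
Qed.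

Lemma dist_pt_set_le c : C c -> dist_pt_set d p C <= d p c.
Proof.
  intros Hc. unfold dist_pt_set, Rinf.
  destruct (Rsup_is_lub (fun x => exists b, C b /\ - x = d p b) 0) as [Hub _].
  - exists (- d p c). exists c. split; [exact Hc | ring].
  - intros x [b [_ Hx]]. pose proof (dist_ge0 d Hd p b). lra.
  - enough (- d p c <= Rsup (fun x => exists b, C b /\ - x = d p b)) by lra.
    apply Hub. exists c. split; [exact Hc | ring].
Qed.

Let far_part := Rsup (fun r => exists b, C b /\ r = dist_pt_set d b S).

Lemma dH_singleton : dH d S C = Rmax (dist_pt_set d p C) far_part.
Proof.
  unfold dH. f_equal. apply Rsup_unique. split.
  - intros r [a [Ha ->]]. apply S_singleton in Ha. subst a. lra.
  - intros ub Hub. apply Hub. exists p. split; [apply S_singleton; reflexivity | reflexivity].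
Qed.

Lemma far_part_is_lub : (exists c, C c) ->
  is_lub (fun r => exists b, C b /\ r = dist_pt_set d b S) far_part.
Proof.
  intros [c Hc]. apply Rsup_is_lub with M.
  - exists (dist_pt_set d c S). exists c. split; [exact Hc | reflexivity].
  - intros r [b [_ ->]]. rewrite dist_pt_singleton. apply d_le_M.
Qed.

Lemma dist_le_dH_singleton c : C c -> d p c <= dH d S C.
Proof.
  intros Hc. rewrite dH_singleton.
  apply Rle_trans with (2 := Rmax_r _ _).
  rewrite dist_sym, <- dist_pt_singleton by exact Hd.
  apply (far_part_is_lub (ex_intro _ c Hc)). exists c. split; [exact Hc | reflexivity].
Qed.

Lemma dH_singleton_gt r : (exists c, C c) -> dH d S C > r -> exists c, C c /\ d p c > r.
Proof.
  intros [c0 Hc0] Hgt. rewrite dH_singleton in Hgt.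
  apply NNPP. intros Hnone.
  assert (Hnear : forall c, C c -> d p c <= r).
  { intros c Hc. apply Rnot_lt_le. intros Hlt. apply Hnone. exists c. auto. }
  assert (far_part <= r).
  { apply (far_part_is_lub (ex_intro _ c0 Hc0)).
    intros x [b [Hb ->]]. rewrite dist_pt_singleton, dist_sym by exact Hd. auto. }
  pose proof (dist_pt_set_le c0 Hc0). specialize (Hnear c0 Hc0).
  unfold Rmax in Hgt. destruct Rle_dec in Hgt; lra.
Qed.

End HausdorffSingleton.

Section Orbits.
Context {X : Type} (d : X -> X -> R) (Hd : is_metric d) (f : nat -> X -> X).

Definition orbit_dist (x y : X) (n : nat) : R := d (omega f n x) (omega f n y).

Definition asymptotic (x y : X) : Prop :=
  forall e, e > 0 -> exists N, forall n, (N <= n)%nat -> orbit_dist x y n < e.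

Definition proximal (x y : X) : Prop :=
  forall e, e > 0 -> forall N, exists n, (N <= n)%nat /\ orbit_dist x y n < e.

Lemma omega_continuous : (forall n, continuous_map d (f n)) ->
  forall n, continuous_map d (omega f n).
Proof.
  intros Hf n. induction n as [|n IHn]; intros x e He; simpl.
  - exists e. split; [exact He | auto].
  - destruct (Hf n (omega f n x) e He) as [e1 [He1 Hcont]].
    destruct (IHn x e1 He1) as [e2 [He2 IHcont]].
    exists e2. split; [exact He2 | auto].
Qed.

Lemma omega_bar_singleton n a z : omega_bar f n (fun y => y = a) z <-> z = omega f n a.
Proof.
  split.
  - intros [a' [-> ->]]. reflexivity.
  - intros ->. exists a. split; reflexivity.
Qed.

Lemma asymptotic_refl x : asymptotic x x.
Proof. intros e He. exists 0%nat. intros n _. unfold orbit_dist. rewrite dist_xx by exact Hd. lra. Qed.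

Lemma proximal_liminf x y : proximal x y -> liminf_eq (orbit_dist x y) 0.
Proof. apply liminf_eq_0_of_nonneg. intros n. apply (dist_ge0 d Hd). Qed.

Lemma proximal_not_asymptotic_scrambled x y :
  proximal x y -> ~ asymptotic x y -> scrambled d (omega f) 0 x y.
Proof.
  intros Hprox Hasym. split.
  - apply limsup_gt_0_of_not_vanishing. exact Hasym.
  - apply proximal_liminf. exact Hprox.
Qed.

Lemma asymptotic_proximal_trans x a b :
  asymptotic x a -> proximal a b -> proximal x b.
Proof.
  intros Hxa Hab e He N.
  destruct (Hxa (e / 2) ltac:(lra)) as [N1 HN1].
  destruct (Hab (e / 2) ltac:(lra) (Nat.max N N1)) as [n [Hn Hb]].
  exists n. split; [lia |]. specialize (HN1 n ltac:(lia)). unfold orbit_dist in *.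
  pose proof (dist_triangle d Hd (omega f n x) (omega f n a) (omega f n b)). lra.
Qed.

Variable M : R.
Hypothesis d_le_M : forall y z, d y z <= M.

Lemma scrambled_singleton_set (a : X) (B : X -> Prop) (r del : R) :
  (exists b, B b) -> dH d (fun y => y = a) B < r ->
  scrambled (dH d) (omega_bar f) del (fun y => y = a) B ->
  (forall b, B b -> d a b < r) /\ (forall b, B b -> proximal a b) /\
  exists e, e > 0 /\
    forall N, exists n, (N <= n)%nat /\ exists b, B b /\ orbit_dist a b n > del + e.
Proof.
  intros [b0 Hb0] Hnear [[e [He Hlimsup]] [Hliminf _]].
  assert (HBn : forall n, exists c, omega_bar f n B c).
  { intros n. exists (omega f n b0), b0. split; [exact Hb0 | reflexivity]. }
  assert (Horbit_le : forall n b, B b -> orbit_dist a b n <=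
                        dH d (omega_bar f n (fun y => y = a)) (omega_bar f n B)).
  { intros n b Hb. apply (dist_le_dH_singleton d Hd M d_le_M);
      [apply omega_bar_singleton | exists b; split; [exact Hb | reflexivity]]. }
  split; [| split].
  - intros b Hb. apply Rle_lt_trans with (2 := Hnear).
    apply (dist_le_dH_singleton d Hd M d_le_M); [intros z; split; auto | exact Hb].
  - intros b Hb e' He' N. destruct (Hliminf e' He' N) as [n [HNn Hn]].
    exists n. split; [exact HNn |]. specialize (Horbit_le n b Hb). lra.
  - exists e. split; [exact He |]. intros N.
    destruct (Hlimsup N) as [n [HNn Hn]]. exists n. split; [exact HNn |].
    destruct (dH_singleton_gt d Hd M d_le_M _ _ _ (omega_bar_singleton n a) _ (HBn n) Hn)
      as [c [[b [Hb ->]] Hc]].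
    exists b. split; [exact Hb | exact Hc].
Qed.

End Orbits.

Lemma LY_sensitive_of_finite_hyperspace {X : Type} (d : X -> X -> R) (f : nat -> X -> X) :
  is_metric d -> compact_space d ->
  LY_sensitive (@nonempty_finite X) (dH d) (omega_bar f) ->
  LY_sensitive (fun _ : X => True) d (omega f).
Proof.
  intros Hd HX [del [Hdel HLY]].
  destruct (compact_space_bounded d Hd HX) as [M HM].
  exists del. split; [exact Hdel |]. intros a _ eps Heps.
  destruct (HLY (fun y => y = a)) with (eps := eps) as [B [[l [Hl HB]] [Hnear Hscr]]];
    [| exact Heps |].
  { exists (a :: nil). split; [discriminate |].
    intros x. simpl. split; [intros ->; auto | intros [-> | []]; reflexivity]. }
  assert (HBne : exists b, B b).
  { destruct l as [| b l]; [congruence |]. exists b. apply HB. left. reflexivity. }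
  destruct (scrambled_singleton_set d Hd f M HM a B eps del HBne Hnear Hscr)
    as [Hclose [Hprox [e [He Hfar]]]].
  destruct (list_pigeonhole l (fun n b => orbit_dist d f a b n > del + e)) as [b [Hbl Hb]].
  { intros N. destruct (Hfar N) as [n [HNn [b [Hb Hn]]]].
    exists n. split; [exact HNn |]. exists b. split; [apply HB, Hb | exact Hn]. }
  apply HB in Hbl.
  exists b. split; [exact I | split; [exact (Hclose b Hbl) | split]].
  - exists e. split; [exact He | exact Hb].
  - exact (proximal_liminf d Hd f a b (Hprox b Hbl)).
Qed.

Section AsymptoticOscillation.
Context {X : Type} (d : X -> X -> R) (Hd : is_metric d) (HX : compact_space d).
Context (f : nat -> X -> X) (Hf : forall n, continuous_map d (f n)).
Variables (x : X) (A : X -> Prop) (c : R).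
Hypothesis c_gt0 : c > 0.
Hypothesis A_asymptotic : forall a, A a -> asymptotic d f x a.
Hypothesis A_escapes : forall a r N, A a -> r > 0 ->
  exists b t, A b /\ d a b < r /\ (N <= t)%nat /\ orbit_dist d f x b t > c.

Lemma oscillation_step a rho N : A a -> rho > 0 ->
  exists b rho', A b /\ rho' > 0 /\ rho' <= rho / 2 /\ d a b + rho' <= rho /\
    (exists t, (N <= t)%nat /\ forall y, d b y <= rho' -> orbit_dist d f x y t > c / 2) /\
    (exists s, (N <= s)%nat /\ forall y, d b y <= rho' -> orbit_dist d f x y s < rho).
Proof.
  intros Ha Hrho.
  destruct (A_escapes a (rho / 2) N Ha ltac:(lra)) as [b [t [Hb [Hab [HNt Ht]]]]].
  destruct (A_asymptotic b Hb (rho / 2) ltac:(lra)) as [N' HN'].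
  set (s := Nat.max N N').
  destruct (omega_continuous d f Hf t b (c / 2) ltac:(lra)) as [h1 [Hh1 Hcont1]].
  destruct (omega_continuous d f Hf s b (rho / 2) ltac:(lra)) as [h2 [Hh2 Hcont2]].
  exists b, (Rmin (rho / 2) (Rmin (h1 / 2) (h2 / 2))).
  pose proof (Rmin_l (rho / 2) (Rmin (h1 / 2) (h2 / 2))).
  pose proof (Rmin_r (rho / 2) (Rmin (h1 / 2) (h2 / 2))).
  pose proof (Rmin_l (h1 / 2) (h2 / 2)). pose proof (Rmin_r (h1 / 2) (h2 / 2)).
  assert (0 < Rmin (rho / 2) (Rmin (h1 / 2) (h2 / 2))).
  { repeat apply Rmin_glb_lt; lra. }
  split; [exact Hb | split; [lra | split; [lra | split; [lra | split]]]].
  - exists t. split; [exact HNt |]. intros y Hy.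
    specialize (Hcont1 y ltac:(lra)). unfold orbit_dist in *.
    pose proof (dist_triangle d Hd (omega f t x) (omega f t y) (omega f t b)).
    rewrite (dist_sym d Hd (omega f t y)) in *. lra.
  - exists s. split; [lia |]. intros y Hy.
    specialize (Hcont2 y ltac:(lra)). specialize (HN' s ltac:(lia)). unfold orbit_dist in *.
    pose proof (dist_triangle d Hd (omega f s x) (omega f s b) (omega f s y)). lra.
Qed.

Lemma asymptotic_set_scrambled_point a r : A a -> r > 0 ->
  exists z, d a z < r /\ scrambled d (omega f) 0 x z.
Proof.
  intros Ha Hr.
  destruct (dependent_choice (fun u : X * R => A (fst u) /\ snd u > 0)
    (fun n u v =>
       snd v <= snd u / 2 /\ d (fst u) (fst v) + snd v <= snd u /\
       (exists t, (n <= t)%nat /\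
          forall y, d (fst v) y <= snd v -> orbit_dist d f x y t > c / 2) /\
       (exists s, (n <= s)%nat /\
          forall y, d (fst v) y <= snd v -> orbit_dist d f x y s < snd u))
    (a, r / 2)) as [u [Hu0 Hu]].
  - simpl. split; [exact Ha | lra].
  - intros n [a' rho] [Ha' Hrho]. simpl in *.
    destruct (oscillation_step a' rho n Ha' Hrho) as [b [rho' [Hb [Hrho' Hstep]]]].
    exists (b, rho'). simpl. split; [split; assumption | exact Hstep].
  - destruct (nested_closed_balls_meet d Hd HX (fun n => fst (u n)) (fun n => snd (u n)))
      as [z Hz].
    { intros n. apply Rlt_le, (proj2 (proj1 (Hu n))). }
    { intros n. exact (proj1 (proj2 (proj2 (Hu n)))). }
    exists z. split; [| split].
    + specialize (Hz 0%nat). rewrite Hu0 in Hz. simpl in Hz. lra.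
    + exists (c / 2). split; [lra |]. intros N.
      destruct (Hu N) as [_ [_ [_ [[t [HNt Ht]] _]]]].
      exists t. split; [exact HNt |]. rewrite Rplus_0_l. exact (Ht z (Hz (S N))).
    + apply (proximal_liminf d Hd). intros e He N.
      destruct (halving_eventually_lt (fun n => snd (u n))
                  (fun n => proj2 (proj1 (Hu n))) (fun n => proj1 (proj2 (Hu n))) e N He)
        as [k [HNk Hk]].
      destruct (Hu k) as [_ [_ [_ [_ [s [Hks Hs]]]]]].
      exists s. split; [lia |]. specialize (Hs z (Hz (S k))). simpl in Hk. lra.
Qed.

End AsymptoticOscillation.

Lemma chaotic_dependence_of_hyperspace_LY {X : Type} (d : X -> X -> R) (f : nat -> X -> X) :
  is_metric d -> compact_space d -> (forall n, continuous_map d (f n)) ->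
  LY_sensitive (nonempty_compact d) (dH d) (omega_bar f) ->
  chaotic_dependence (fun _ : X => True) d (omega f).
Proof.
  intros Hd HX Hf [del [Hdel HLY]] x _ eps Heps.
  destruct (compact_space_bounded d Hd HX) as [M HM].
  apply NNPP. intros Hnone.
  assert (Hasym : forall y, d x y < eps -> proximal d f x y -> asymptotic d f x y).
  { intros y Hy Hprox. apply NNPP. intros Hnasym. apply Hnone. exists y.
    split; [exact I | split; [exact Hy |]].
    exact (proximal_not_asymptotic_scrambled d Hd f x y Hprox Hnasym). }
  set (A := fun a => asymptotic d f x a /\ d x a < eps).
  assert (Hescape : forall a r N, A a -> r > 0 ->
            exists b t, A b /\ d a b < r /\ (N <= t)%nat /\ orbit_dist d f x b t > del / 2).
  { intros a r N [Hxa Ha] Hr.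
    set (r' := Rmin r (eps - d x a)).
    assert (Hr' : r' > 0) by (apply Rmin_glb_lt; lra).
    destruct (HLY (fun y => y = a)) with (eps := r')
      as [B [[HBne _] [Hnear Hscr]]]; [split; [exists a; reflexivity | apply singleton_compact] | exact Hr' |].
    destruct (scrambled_singleton_set d Hd f M HM a B r' del HBne Hnear Hscr)
      as [Hclose [Hprox [e [He Hfar]]]].
    destruct (Hxa (del / 2) ltac:(lra)) as [N1 HN1].
    destruct (Hfar (Nat.max N N1)) as [t [Ht [b [Hb Hbt]]]].
    specialize (HN1 t ltac:(lia)). specialize (Hclose b Hb).
    assert (r' <= r /\ r' <= eps - d x a) by (split; [apply Rmin_l | apply Rmin_r]).
    assert (Hxb : d x b < eps) by (pose proof (dist_triangle d Hd x a b); lra).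
    exists b, t. split; [| split; [lra | split; [lia |]]].
    - split; [| exact Hxb]. apply Hasym; [exact Hxb |].
      exact (asymptotic_proximal_trans d Hd f x a b Hxa (Hprox b Hb)).
    - unfold orbit_dist in *.
      pose proof (dist_triangle d Hd (omega f t a) (omega f t x) (omega f t b)) as Htri.
      rewrite (dist_sym d Hd (omega f t a) (omega f t x)) in Htri. lra. }
  destruct (asymptotic_set_scrambled_point d Hd HX f Hf x A (del / 2) ltac:(lra)
              (fun a Ha => proj1 Ha) Hescape x eps) as [z [Hz Hscr]]; [| exact Heps |].
  - split; [apply (asymptotic_refl d Hd) | rewrite (dist_xx d Hd); exact Heps].
  - apply Hnone. exists z. split; [exact I | split; [exact Hz | exact Hscr]].
Qed.

Theorem mainTheorem10 (X : Type) (d : X -> X -> R) (f : nat -> X -> X)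
  (Hd : is_metric d) (HX : compact_space d)
  (Hf : forall n, continuous_map d (f n)) :
  (LY_sensitive (nonempty_compact d) (dH d) (omega_bar f) ->
     chaotic_dependence (fun _ : X => True) d (omega f)) /\
  (LY_sensitive (@nonempty_finite X) (dH d) (omega_bar f) ->
     LY_sensitive (fun _ : X => True) d (omega f)).
Proof.
  split.
  - exact (chaotic_dependence_of_hyperspace_LY d f Hd HX Hf).
  - exact (LY_sensitive_of_finite_hyperspace d f Hd HX).
Qed.
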